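(* The functor $\iota\colon \mathcal{D}iag \to \mathcal{D}iag^S$ induced by the inclusion of generators $\mathcal{D}_0 \hookrightarrow \mathcal{D}^S_0$ is an isomorphism of categories.
   Context: Monoidal categories are strict. In a braided monoidal category with braiding $\tau$, a coalgebra is an object $C$ with $\Delta\colon C\to C\otimes C$, $\varepsilon\colon C\to\mathbf 1$ satisfying $(\mathrm{id}\otimes\Delta)\Delta=(\Delta\otimes\mathrm{id})\Delta$ and $(\varepsilon\otimes\mathrm{id})\Delta=\mathrm{id}=(\mathrm{id}\otimes\varepsilon)\Delta$; if $C,C'$ are coalgebras, $C\otimes C'$ is a coalgebra with counit $\varepsilon\otimes\varepsilon'$ and coproduct $(\mathrm{id}_C\otimes\tau_{C,C'}\otimes\mathrm{id}_{C'})(\Delta\otimes\Delta')$; hence $C^{\otimes n}$ is a coalgebra for all $n\ge 0$. For a coalgebra $C$ in a braided category $\mathcal{C}$, the convolution category $\mathrm{Conv}_{\mathcal C}(C,\mathbf 1)$ has objects the non-negative integers, no morphisms $m\to n$ for $m\ne n$, and $\mathrm{End}(n)=\mathrm{Hom}_{\mathcal C}(C^{\otimes n},\mathbf 1)$ with composition $f\circ g=(f\otimes g)\Delta_{C^{\otimes n}}$ and identity $\varepsilon^{\otimes n}$. Let $\mathcal{D}_0$ be the braided strict monoidal category freely generated by one object $*$ and morphisms $\Delta\colon *\to *\otimes *$, $\varepsilon\colon *\to\mathbf 1$, $\omega_+,\omega_-\colon *\otimes*\to\mathbf 1$, $\theta_+,\theta_-\colon *\to\mathbf 1$; let $\mathcal{D}$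 be its quotient by the relations $(\mathrm{id}_*\otimes\Delta)\Delta=(\Delta\otimes\mathrm{id}_* )\Delta$ and $(\mathrm{id}_*\otimes\varepsilon)\Delta=\mathrm{id}_*=(\varepsilon\otimes\mathrm{id}_* )\Delta$ (i.e. by the smallest congruence compatible with composition and tensor product containing them). Let $\mathcal{D}^S_0$ be the braided strict monoidal category freely generated by $*$ and the same morphisms together with two further morphisms $S, S^{-1}\colon *\to *$ (formal generators), and let $\mathcal{D}^S$ be its quotient by the two relations above together with: $SS^{-1}=\mathrm{id}_*=S^{-1}S$; $\Delta S=(S\otimes S)\tau_{*,*}\Delta$; $\varepsilon S=\varepsilon$; $\theta_\pm S=\theta_\pm$; $\omega_+(S\otimes\mathrm{id}_* )=\omega_-=\omega_+(\mathrm{id}_*\otimes S)$; $\omega_+(S^{-1}\otimes\mathrm{id}_* )=\omega_-\tau_{*,*}=\omega_+(\mathrm{id}_*\otimes S^{-1})$, where $\tau_{*,*}$ is the braiding of $*$ with itself. In $\mathcal D$ and $\mathcal D^S$, $( *,\Delta,\varepsilon)$ is a coalgebra. Define $\mathcal{D}iag=\mathrm{Conv}_{\mathcal D}( *,\mathbf 1)$ and $\mathcal{D}iag^S=\mathrm{Conv}_{\mathcal D^S}( *,\mathbf 1)$. The inclusion $\mathcal D_0\hookrightarrow\mathcal D^S_0$ induces a functor $\mathcal D\to\mathcal D^S$ and hence a functor $\iota\colon\mathcal{D}iag\to\mathcal{D}iag^S$ which is the identity on objects. *)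

(* a syntactic (term-model) presentation of free braided strict
   monoidal categories on one generating object *, whose objects are the
   tensor powers *^{(x)n}, i.e. natural numbers (tensor = +, unit = 0). *)
From Stdlib Require Import Arith.
Set Implicit Arguments.

Inductive term (G : Type) : Type :=
| Gen (g : G)
| Id (n : nat)
| Comp (f g : term G)        (* f o g *)
| Tens (f g : term G)
| Braid (m n : nat)
| BraidInv (m n : nat).

Arguments Id {G}. Arguments Braid {G}. Arguments BraidInv {G}.

Section Terms.
Variable G : Type.
Variable dc : G -> nat * nat. (* (source, target) of generators *)

Fixpoint ty (t : term G) : option (nat * nat) :=
  match t with
  | Gen g => Some (dc g)
  | Id n => Some (n, n)
  | Comp f g =>
      match ty f, ty g with
      | Some (a, b), Some (c, d) => if Nat.eqb d a then Some (c, b) else None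
      | _, _ => None
      end
  | Tens f g =>
      match ty f, ty g with
      | Some (a, b), Some (c, d) => Some (a + c, b + d)
      | _, _ => None
      end
  | Braid m n => Some (m + n, n + m)
  | BraidInv m n => Some (n + m, m + n)
  end.

Definition wt (t : term G) (m n : nat) : Prop := ty t = Some (m, n).

Inductive eqv (R : term G -> term G -> Prop) : term G -> term G -> Prop :=
| e_refl t : eqv R t t
| e_sym f g : eqv R f g -> eqv R g f
| e_trans f g h : eqv R f g -> eqv R g h -> eqv R f h
| e_comp f f' g g' : eqv R f f' -> eqv R g g' -> eqv R (Comp f g) (Comp f' g')
| e_tens f f' g g' : eqv R f f' -> eqv R g g' -> eqv R (Tens f g) (Tens f' g')
| e_rel f g : R f g -> eqv R f g
| e_idl f m n : wt f m n -> eqv R (Comp (Id n) f) f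
| e_idr f m n : wt f m n -> eqv R (Comp f (Id m)) f
| e_assoc f g h a b c d : wt h a b -> wt g b c -> wt f c d ->
    eqv R (Comp f (Comp g h)) (Comp (Comp f g) h)
| e_tassoc f g h a b c d e k : wt f a b -> wt g c d -> wt h e k ->
    eqv R (Tens (Tens f g) h) (Tens f (Tens g h))
| e_tunitl f a b : wt f a b -> eqv R (Tens (Id 0) f) f
| e_tunitr f a b : wt f a b -> eqv R (Tens f (Id 0)) f
| e_tid m n : eqv R (Tens (Id m) (Id n)) (Id (m + n))
| e_interchange f f' g g' a b c a' b' c' :
    wt g a b -> wt f b c -> wt g' a' b' -> wt f' b' c' ->
    eqv R (Comp (Tens f f') (Tens g g')) (Tens (Comp f g) (Comp f' g'))
| e_braid_nat f g a b c d : wt f a b -> wt g c d ->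
    eqv R (Comp (Braid b d) (Tens f g)) (Comp (Tens g f) (Braid a c))
| e_braid_inv1 m n : eqv R (Comp (BraidInv m n) (Braid m n)) (Id (m + n))
| e_braid_inv2 m n : eqv R (Comp (Braid m n) (BraidInv m n)) (Id (n + m))
| e_hex1 m n p : eqv R (Braid m (n + p))
    (Comp (Tens (Id n) (Braid m p)) (Tens (Braid m n) (Id p)))
| e_hex2 m n p : eqv R (Braid (m + n) p)
    (Comp (Tens (Braid m p) (Id n)) (Tens (Id m) (Braid n p))).

(* Coalgebra structure of C^{(x)n}, with C^{(x)(k+1)} = C (x) C^{(x)k}. *)
Fixpoint DeltaN (d : term G) (n : nat) : term G :=
  match n with
  | 0 => Id 0
  | S k => Comp (Tens (Tens (Id 1) (Braid 1 k)) (Id k)) (Tens d (DeltaN d k))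
  end.

Fixpoint EpsN (e : term G) (n : nat) : term G :=
  match n with
  | 0 => Id 0
  | S k => Tens e (EpsN e k)
  end.

(* Convolution composition and identity in End(n) = Hom(C^{(x)n}, 1). *)
Definition conv_comp (d : term G) (n : nat) (f g : term G) : term G :=
  Comp (Tens f g) (DeltaN d n).
Definition conv_id (e : term G) (n : nat) : term G := EpsN e n.

End Terms.

Fixpoint tmap (G H : Type) (phi : G -> H) (t : term G) : term H :=
  match t with
  | Gen g => Gen (phi g)
  | Id n => Id n
  | Comp f g => Comp (tmap phi f) (tmap phi g)
  | Tens f g => Tens (tmap phi f) (tmap phi g)
  | Braid m n => Braid m n
  | BraidInv m n => BraidInv m n
  end.

Inductive genD : Type :=
| gDelta | gEps | gOmega (plus : bool) | gTheta (plus : bool).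

Definition dcD (g : genD) : nat * nat :=
  match g with
  | gDelta => (1, 2) | gEps => (1, 0) | gOmega _ => (2, 0) | gTheta _ => (1, 0)
  end.

Notation DeltaD := (Gen gDelta).
Notation EpsD := (Gen gEps).

Inductive relD : term genD -> term genD -> Prop :=
| rD_coassoc : relD (Comp (Tens (Id 1) DeltaD) DeltaD) (Comp (Tens DeltaD (Id 1)) DeltaD)
| rD_counitr : relD (Comp (Tens (Id 1) EpsD) DeltaD) (Id 1)
| rD_counitl : relD (Comp (Tens EpsD (Id 1)) DeltaD) (Id 1).

Definition eqvD := eqv dcD relD.
Definition homD (n : nat) (f : term genD) := wt dcD f n 0.
Definition convD (n : nat) f g := conv_comp DeltaD n f g.
Definition convidD (n : nat) := conv_id EpsD n.

Inductive genDS : Type :=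
| gOld (g : genD) | gS | gSinv.

Definition dcDS (g : genDS) : nat * nat :=
  match g with gOld g => dcD g | gS => (1, 1) | gSinv => (1, 1) end.

Notation DeltaS := (Gen (gOld gDelta)).
Notation EpsS := (Gen (gOld gEps)).
Notation OmegaS b := (Gen (gOld (gOmega b))).
Notation ThetaS b := (Gen (gOld (gTheta b))).
Notation SS := (Gen gS).
Notation SSinv := (Gen gSinv).

Inductive relDS : term genDS -> term genDS -> Prop :=
| rS_coassoc : relDS (Comp (Tens (Id 1) DeltaS) DeltaS) (Comp (Tens DeltaS (Id 1)) DeltaS)
| rS_counitr : relDS (Comp (Tens (Id 1) EpsS) DeltaS) (Id 1)
| rS_counitl : relDS (Comp (Tens EpsS (Id 1)) DeltaS) (Id 1)
| rS_inv1 : relDS (Comp SS SSinv) (Id 1)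
| rS_inv2 : relDS (Comp SSinv SS) (Id 1)
| rS_delta : relDS (Comp DeltaS SS) (Comp (Tens SS SS) (Comp (Braid 1 1) DeltaS))
| rS_eps : relDS (Comp EpsS SS) EpsS
| rS_theta (b : bool) : relDS (Comp (ThetaS b) SS) (ThetaS b)
| rS_omega1 : relDS (Comp (OmegaS true) (Tens SS (Id 1))) (OmegaS false)
| rS_omega2 : relDS (Comp (OmegaS true) (Tens (Id 1) SS)) (OmegaS false)
| rS_omega3 : relDS (Comp (OmegaS true) (Tens SSinv (Id 1))) (Comp (OmegaS false) (Braid 1 1))
| rS_omega4 : relDS (Comp (OmegaS true) (Tens (Id 1) SSinv)) (Comp (OmegaS false) (Braid 1 1)).

Definition eqvS := eqv dcDS relDS.
Definition homS (n : nat) (f : term genDS) := wt dcDS f n 0.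
Definition convS (n : nat) f g := conv_comp DeltaS n f g.
Definition convidS (n : nat) := conv_id EpsS n.

Definition iota : term genD -> term genDS := tmap gOld.

(* iota is an isomorphism of categories: it has an inverse functor
   (identity on objects, given on representatives of hom-classes). *)
Definition iota_is_iso : Prop :=
  exists Ginv : nat -> term genDS -> term genD,
    (forall n f, homS n f -> homD n (Ginv n f)) /\
    (forall n f g, homS n f -> homS n g -> eqvS f g -> eqvD (Ginv n f) (Ginv n g)) /\
    (forall n, eqvD (Ginv n (convidS n)) (convidD n)) /\
    (forall n f g, homS n f -> homS n g ->
        eqvD (Ginv n (convS n f g)) (convD n (Ginv n f) (Ginv n g))) /\
    (forall n f, homD n f -> eqvD (Ginv n (iota f)) f) /\
    (forall n f, homS n f -> eqvS (iota (Ginv n f)) f).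

(* Every morphism of D^S can be written as (S^k₁ ⊗ ... ⊗ S^kₘ) ∘ ι g with g in D:
   the relations of D^S slide powers of S from the source of each generator to its
   target, Δ S^a = (S^a ⊗ S^a) τ^a Δ, ε S^a = ε, θ± S^a = θ±, and
   ω₊ ∘ (S^x ⊗ S^y) = ω± ∘ τ^j with the sign and j determined by x + y.
   Sliding an integer vector through a morphism of D defines an action of Z^n on
   the morphisms of D that respects all relations of D; for coassociativity and
   counitality this is because conjugating Δ by a braid power preserves them, by
   the Yang-Baxter equation.  Hence f ↦ (g, k) is well defined on D^S.  For a
   morphism into the unit the vector k is empty, so f ↦ g inverts ι; it respects
   convolution because sliding the zero vector changes nothing. *)

From Pilot Require Import Defs.
From Stdlib Require Import Arith ZArith List Lia Setoid Morphisms.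
Import ListNotations.

(** * Terms modulo the braided monoidal relations *)

#[global] Instance eqv_Equivalence G dc R : Equivalence (@eqv G dc R).
Proof. split; [intro; apply e_refl | intros ??; apply e_sym | intros ???; apply e_trans]. Qed.
#[global] Instance Comp_Proper G dc R : Proper (eqv dc R ==> eqv dc R ==> eqv dc R) (@Comp G).
Proof. intros ?? H ?? H'; apply e_comp; auto. Qed.
#[global] Instance Tens_Proper G dc R : Proper (eqv dc R ==> eqv dc R ==> eqv dc R) (@Tens G).
Proof. intros ?? H ?? H'; apply e_tens; auto. Qed.

Hint Rewrite Nat.eqb_refl : ty_db.

Ltac eqb_true := repeat match goal with |- context [Nat.eqb ?x ?y] =>
  replace (Nat.eqb x y) with true by (symmetry; apply Nat.eqb_eq; lia) end.

Ltac typecheck :=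
  unfold wt in *; cbn [ty]; autorewrite with ty_db;
  repeat match goal with H : ty _ ?f = Some _ |- context [ty _ ?f] => rewrite H end;
  simpl; eqb_true; first [discriminate | reflexivity | f_equal; f_equal; lia].

Section Calculus.
Context {G : Type} {dc : G -> nat * nat} {R : term G -> term G -> Prop}.
Local Notation "f == g" := (eqv dc R f g) (at level 70).
Local Notation wt := (wt dc).

Lemma wt_comp_inv f g n m : wt (Comp f g) n m -> exists p, wt g n p /\ wt f p m.
Proof.
  unfold wt; simpl.
  destruct (ty dc f) as [[a b]|]; destruct (ty dc g) as [[c d]|]; try discriminate.
  destruct (Nat.eqb_spec d a); intro H; inversion H; subst; eauto.
Qed.

Lemma wt_tens_inv f g n m : wt (Tens f g) n m ->
  exists a b c d, wt f a b /\ wt g c d /\ n = a + c /\ m = b + d.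
Proof.
  unfold wt; simpl.
  destruct (ty dc f) as [[a b]|]; destruct (ty dc g) as [[c d]|]; try discriminate.
  intro H; inversion H; subst; eauto 10.
Qed.

Lemma wt_unique f a b c d : wt f a b -> wt f c d -> a = c /\ b = d.
Proof. unfold Defs.wt; intros H1 H2; rewrite H1 in H2; injection H2; auto. Qed.

Ltac ty_cases := repeat match goal with
  | |- context [ty dc ?f] => let E := fresh in destruct (ty dc f) as [[? ?]|] eqn:E
  end; simpl; try congruence;
  repeat (match goal with |- context [Nat.eqb ?x ?y] => destruct (Nat.eqb_spec x y) end;
          simpl; try congruence); intros; subst.

Lemma comp_assoc f g h : ty dc (Comp (Comp f g) h) <> None ->
  Comp (Comp f g) h == Comp f (Comp g h).
Proof. simpl; ty_cases; symmetry; eapply e_assoc; unfold Defs.wt; eauto. Qed.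

Lemma id_comp n f : ty dc (Comp (Id n) f) <> None -> Comp (Id n) f == f.
Proof. simpl; ty_cases; eapply e_idl; unfold Defs.wt; eauto. Qed.

Lemma comp_id n f : ty dc (Comp f (Id n)) <> None -> Comp f (Id n) == f.
Proof. simpl; ty_cases; eapply e_idr; unfold Defs.wt; eauto. Qed.

Lemma tens_comp f f' g g' : ty dc (Tens (Comp f g) (Comp f' g')) <> None ->
  Comp (Tens f f') (Tens g g') == Tens (Comp f g) (Comp f' g').
Proof. simpl; ty_cases; eapply e_interchange; unfold Defs.wt; eauto. Qed.

Lemma tens_id0_l f : ty dc f <> None -> Tens (Id 0) f == f.
Proof. ty_cases; eapply e_tunitl; unfold Defs.wt; eauto. Qed.

Lemma tens_id0_r f : ty dc f <> None -> Tens f (Id 0) == f.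
Proof. ty_cases; eapply e_tunitr; unfold Defs.wt; eauto. Qed.

Lemma tens_assoc f g h : ty dc (Tens (Tens f g) h) <> None ->
  Tens (Tens f g) h == Tens f (Tens g h).
Proof. simpl; ty_cases; eapply e_tassoc; unfold Defs.wt; eauto. Qed.

Lemma tens_id_comp k f g a b c : wt g a b -> wt f b c ->
  Tens (Id k) (Comp f g) == Comp (Tens (Id k) f) (Tens (Id k) g).
Proof. intros. rewrite tens_comp, id_comp; [reflexivity | typecheck..]. Qed.

Lemma comp_tens_id k f g a b c : wt g a b -> wt f b c ->
  Tens (Comp f g) (Id k) == Comp (Tens f (Id k)) (Tens g (Id k)).
Proof. intros. rewrite tens_comp, id_comp; [reflexivity | typecheck..]. Qed.

Lemma braid_natural f g a b c d : wt f a b -> wt g c d ->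
  Comp (Braid b d) (Tens f g) == Comp (Tens g f) (Braid a c).
Proof. intros; eapply e_braid_nat; eauto. Qed.

Lemma braid_inv_natural f g a b c d : wt f a b -> wt g c d ->
  Comp (BraidInv b d) (Tens g f) == Comp (Tens f g) (BraidInv a c).
Proof.
  intros Hf Hg.
  rewrite <- (comp_id (c + a) (Tens g f)), <- (e_braid_inv2 dc R a c) by typecheck.
  rewrite <- (comp_assoc (Tens g f)), <- (braid_natural _ _ _ _ _ _ Hf Hg) by typecheck.
  rewrite comp_assoc, <- (comp_assoc (BraidInv b d)), e_braid_inv1 by typecheck.
  rewrite id_comp by typecheck. reflexivity.
Qed.

Lemma invertible_idempotent_id (B Bi : term G) n : wt B n n -> wt Bi n n ->
  Comp Bi B == Id n -> Comp B B == B -> B == Id n.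
Proof.
  intros HB HBi Hinv Hidem.
  symmetry. rewrite <- Hinv. rewrite <- Hidem at 1.
  rewrite <- comp_assoc, Hinv, id_comp by typecheck. reflexivity.
Qed.

(* The hexagon axioms with an empty strand make [Braid 0 n] idempotent. *)
Lemma braid_0_l n : Braid 0 n == Id n.
Proof.
  apply invertible_idempotent_id with (Bi := BraidInv 0 n);
    [typecheck | typecheck | apply e_braid_inv1 |].
  pose proof (e_hex2 dc R 0 0 n) as H; simpl in H.
  rewrite tens_id0_r, tens_id0_l in H by typecheck. symmetry; exact H.
Qed.

Lemma braid_0_r n : Braid n 0 == Id n.
Proof.
  replace n with (n + 0) at 2 by lia.
  apply invertible_idempotent_id with (Bi := BraidInv n 0);
    [typecheck | typecheck | apply e_braid_inv1 |].
  pose proof (e_hex1 dc R n 0 0) as H; simpl in H.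
  rewrite tens_id0_r, tens_id0_l in H by typecheck. symmetry; exact H.
Qed.

Lemma braid_inv_of_id m n : Braid m n == Id (m + n) -> BraidInv m n == Id (m + n).
Proof.
  intro H. rewrite <- (e_braid_inv1 dc R m n), H, comp_id by typecheck. reflexivity.
Qed.

Lemma left_inv_eq_right_inv (B Bi X : term G) n : wt B n n -> wt Bi n n -> wt X n n ->
  Comp Bi B == Id n -> Comp B X == Id n -> Bi == X.
Proof.
  intros HB HBi HX H1 H2.
  rewrite <- (comp_id n Bi), <- H2, <- comp_assoc, H1, id_comp by typecheck. reflexivity.
Qed.

Fixpoint npow (k : nat) (u : term G) (n : nat) : term G :=
  match n with 0 => Id k | S n => Comp u (npow k u n) end.

(* Integer powers of [u], with [v] playing the role of [u^-1]. *)
Definition zpow (k : nat) (u v : term G) (z : Z) : term G :=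
  match z with
  | Z0 => Id k
  | Zpos p => npow k u (Pos.to_nat p)
  | Zneg p => npow k v (Pos.to_nat p)
  end.

Lemma zpow_of_nat k u v m : zpow k u v (Z.of_nat m) = npow k u m.
Proof. destruct m; simpl; auto. rewrite SuccNat2Pos.id_succ. auto. Qed.

Lemma zpow_opp_of_nat k u v m : zpow k u v (- Z.of_nat m) = npow k v m.
Proof. destruct m; simpl; auto. rewrite SuccNat2Pos.id_succ. auto. Qed.

Lemma wt_npow k u n : wt u k k -> wt (npow k u n) k k.
Proof. intros; induction n; simpl; typecheck. Qed.

Lemma Z_nat_cases z : (exists m, z = Z.of_nat m) \/ (exists m, z = - Z.of_nat (S m))%Z.
Proof.
  destruct (Z_le_gt_dec 0 z).
  - left; exists (Z.to_nat z); lia.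
  - right; exists (Z.to_nat (- z) - 1)%nat; lia.
Qed.

Section IntegerPowers.
Variables (k : nat) (u v : term G).
Hypotheses (Hu : wt u k k) (Hv : wt v k k).

Lemma wt_zpow z : wt (zpow k u v z) k k.
Proof. destruct z; simpl; try apply wt_npow; auto; typecheck. Qed.

Lemma zpow_ind (P : term G -> Prop) : P (Id k) ->
  (forall t, wt t k k -> P t -> P (Comp u t)) ->
  (forall t, wt t k k -> P t -> P (Comp v t)) ->
  forall z, P (zpow k u v z).
Proof.
  intros P0 Pu Pv z.
  assert (Pn : forall w n, wt w k k -> (forall t, wt t k k -> P t -> P (Comp w t)) ->
                 P (npow k w n)).
  { intros w n Hw Pw; induction n; simpl; auto using wt_npow. }
  destruct z; simpl; auto.
Qed.

Hypotheses (Huv : Comp u v == Id k) (Hvu : Comp v u == Id k).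

Lemma zpow_succ z : Comp u (zpow k u v z) == zpow k u v (z + 1).
Proof.
  destruct (Z_nat_cases z) as [[m ->]|[m ->]].
  - replace (Z.of_nat m + 1)%Z with (Z.of_nat (S m)) by lia.
    rewrite !zpow_of_nat. reflexivity.
  - replace (- Z.of_nat (S m) + 1)%Z with (- Z.of_nat m)%Z by lia.
    rewrite !zpow_opp_of_nat. simpl. pose proof (wt_npow k v m Hv).
    rewrite <- (comp_assoc u), Huv, id_comp by typecheck. reflexivity.
Qed.

Lemma zpow_pred z : Comp v (zpow k u v z) == zpow k u v (z - 1).
Proof.
  destruct (Z_nat_cases (z - 1)) as [[m E]|[m E]].
  - rewrite E. replace z with (Z.of_nat (S m)) by lia. rewrite !zpow_of_nat.
    simpl. pose proof (wt_npow k u m Hu).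
    rewrite <- (comp_assoc v), Hvu, id_comp by typecheck. reflexivity.
  - rewrite E. replace z with (- Z.of_nat m)%Z by lia. rewrite !zpow_opp_of_nat. reflexivity.
Qed.

Lemma zpow_add a b : Comp (zpow k u v a) (zpow k u v b) == zpow k u v (a + b).
Proof.
  pose proof (wt_zpow b).
  destruct (Z_nat_cases a) as [[m ->]|[m ->]].
  - rewrite zpow_of_nat. induction m; simpl npow.
    + rewrite id_comp by typecheck. reflexivity.
    + pose proof (wt_npow k u m Hu).
      rewrite comp_assoc, IHm, zpow_succ by typecheck. f_equiv; lia.
  - rewrite zpow_opp_of_nat. induction m.
    + simpl npow. rewrite comp_assoc, id_comp, zpow_pred by typecheck. f_equiv; lia.
    + change (npow k v (S (S m))) with (Comp v (npow k v (S m))).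
      pose proof (wt_npow k v (S m) Hv).
      rewrite comp_assoc, IHm, zpow_pred by typecheck. f_equiv; lia.
Qed.
End IntegerPowers.

Lemma npow_swap w m : wt w 2 2 ->
  (forall A B, wt A 1 1 -> wt B 1 1 -> Comp w (Tens A B) == Comp (Tens B A) w) ->
  forall A B, wt A 1 1 -> wt B 1 1 ->
  Comp (npow 2 w m) (Tens A B) ==
  Comp (if Nat.even m then Tens A B else Tens B A) (npow 2 w m).
Proof.
  intros Hw Hswap. induction m as [|m IHm]; intros A B HA HB; simpl npow.
  - simpl. rewrite id_comp, comp_id by typecheck. reflexivity.
  - pose proof (wt_npow 2 w m Hw).
    rewrite comp_assoc, IHm by typecheck.
    rewrite Nat.even_succ, <- Nat.negb_even.
    destruct (Nat.even m); simpl;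
      rewrite <- comp_assoc, Hswap, comp_assoc by typecheck; reflexivity.
Qed.

End Calculus.

(** * Braid powers on two strands *)

Definition cpow {G} (z : Z) : term G := zpow 2 (Braid 1 1) (BraidInv 1 1) z.

Lemma cpow_ty {G} (dc : G -> nat * nat) z : ty dc (cpow z) = Some (2, 2).
Proof. apply wt_zpow; typecheck. Qed.
Hint Rewrite @cpow_ty : ty_db.

Section BraidPowers.
Context {G : Type} {dc : G -> nat * nat} {R : term G -> term G -> Prop}.
Local Notation "f == g" := (eqv dc R f g) (at level 70).
Local Notation wt := (wt dc).
Local Notation c := (@Braid G 1 1).
Local Notation ci := (@BraidInv G 1 1).
Local Notation I1 := (@Id G 1).

Lemma cpow_add a b : Comp (cpow a) (cpow b) == cpow (a + b).
Proof. apply zpow_add; [typecheck | typecheck | apply e_braid_inv2 | apply e_braid_inv1]. Qed.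

Lemma Z_even_of_nat m : Z.even (Z.of_nat m) = Nat.even m.
Proof.
  induction m as [|m IHm]; auto.
  rewrite Nat2Z.inj_succ, Z.even_succ, Nat.even_succ, <- Z.negb_even, <- Nat.negb_even, IHm.
  reflexivity.
Qed.

Lemma cpow_swap j A B : wt A 1 1 -> wt B 1 1 ->
  Comp (cpow j) (Tens A B) == Comp (if Z.even j then Tens A B else Tens B A) (cpow j).
Proof.
  intros HA HB. unfold cpow.
  destruct (Z_nat_cases j) as [[m ->]|[m ->]].
  - rewrite zpow_of_nat, Z_even_of_nat.
    apply npow_swap; auto; [typecheck | intros; eapply braid_natural; eauto].
  - rewrite zpow_opp_of_nat, Z.even_opp, Z_even_of_nat.
    apply npow_swap; auto; [typecheck | intros; eapply braid_inv_natural; eauto].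
Qed.

Local Notation s1 := (Tens c I1).
Local Notation s2 := (Tens I1 c).
Local Notation s1' := (Tens ci I1).
Local Notation s2' := (Tens I1 ci).

Lemma braid_2_1_split : Braid 2 1 == Comp s1 s2.
Proof. exact (e_hex2 dc R 1 1 1). Qed.

Lemma braid_1_2_split : Braid 1 2 == Comp s2 s1.
Proof. exact (e_hex1 dc R 1 1 1). Qed.

Lemma yang_baxter : Comp s2 (Comp s1 s2) == Comp s1 (Comp s2 s1).
Proof.
  pose proof (braid_natural (dc := dc) (R := R) I1 c 1 1 2 2) as H.
  specialize (H ltac:(typecheck) ltac:(typecheck)).
  rewrite braid_1_2_split, comp_assoc in H by typecheck. exact H.
Qed.

Lemma s1_s1' : Comp s1 s1' == Id 3.
Proof. rewrite tens_comp, e_braid_inv2, id_comp by typecheck. apply e_tid. Qed.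

Lemma s2_s2' : Comp s2 s2' == Id 3.
Proof. rewrite tens_comp, e_braid_inv2, id_comp by typecheck. apply e_tid. Qed.

Lemma braid_inv_1_2_split : BraidInv 1 2 == Comp s1' s2'.
Proof.
  apply (left_inv_eq_right_inv (Braid 1 2) _ _ 3); try typecheck; [apply e_braid_inv1|].
  rewrite braid_1_2_split, comp_assoc, <- (comp_assoc s1), s1_s1', id_comp by typecheck.
  apply s2_s2'.
Qed.

Lemma braid_inv_2_1_split : BraidInv 2 1 == Comp s2' s1'.
Proof.
  apply (left_inv_eq_right_inv (Braid 2 1) _ _ 3); try typecheck; [apply e_braid_inv1|].
  rewrite braid_2_1_split, comp_assoc, <- (comp_assoc s2), s2_s2', id_comp by typecheck.
  apply s1_s1'.
Qed.

Lemma yang_baxter_inv : Comp s2' (Comp s1' s2') == Comp s1' (Comp s2' s1').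
Proof.
  pose proof (braid_inv_natural (dc := dc) (R := R) I1 ci 1 1 2 2) as H.
  specialize (H ltac:(typecheck) ltac:(typecheck)).
  rewrite braid_inv_1_2_split, comp_assoc in H by typecheck. symmetry; exact H.
Qed.

Definition coassociative (D : term G) := Comp (Tens I1 D) D == Comp (Tens D I1) D.
Definition counital (e D : term G) := Comp (Tens I1 e) D == I1 /\ Comp (Tens e I1) D == I1.

#[local] Instance coassociative_Proper : Proper (eqv dc R ==> iff) coassociative.
Proof. intros X Y E; unfold coassociative; rewrite E; reflexivity. Qed.
#[local] Instance counital_Proper e : Proper (eqv dc R ==> iff) (counital e).
Proof. intros X Y E; unfold counital; rewrite E; reflexivity. Qed.

Lemma coassociative_braid D : wt D 1 2 -> coassociative D -> coassociative (Comp c D).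
Proof.
  unfold coassociative; intros HD H.
  rewrite (tens_id_comp 1 c D 1 2 2), (comp_tens_id 1 c D 1 2 2) by typecheck.
  rewrite comp_assoc, <- (comp_assoc (Tens I1 D)) by typecheck.
  rewrite <- (braid_natural D I1 1 2 1 1 HD ltac:(typecheck)).
  rewrite (comp_assoc s1), <- (comp_assoc (Tens D I1)) by typecheck.
  rewrite <- (braid_natural I1 D 1 1 1 2 ltac:(typecheck) HD).
  rewrite (comp_assoc (Braid 2 1)), (comp_assoc (Braid 1 2)), <- H by typecheck.
  rewrite braid_2_1_split, braid_1_2_split by typecheck.
  rewrite <- (comp_assoc s2 (Comp s1 s2)), <- (comp_assoc s1 (Comp s2 s1)) by typecheck.
  rewrite yang_baxter. reflexivity.
Qed.

Lemma coassociative_braid_inv D : wt D 1 2 -> coassociative D -> coassociative (Comp ci D).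
Proof.
  unfold coassociative; intros HD H.
  rewrite (tens_id_comp 1 ci D 1 2 2), (comp_tens_id 1 ci D 1 2 2) by typecheck.
  rewrite comp_assoc, <- (comp_assoc (Tens I1 D)) by typecheck.
  rewrite <- (braid_inv_natural I1 D 1 1 1 2 ltac:(typecheck) HD).
  rewrite (comp_assoc s1'), <- (comp_assoc (Tens D I1)) by typecheck.
  rewrite <- (braid_inv_natural D I1 1 2 1 1 HD ltac:(typecheck)).
  rewrite (comp_assoc (BraidInv 1 2)), (comp_assoc (BraidInv 2 1)), <- H by typecheck.
  rewrite braid_inv_2_1_split, braid_inv_1_2_split by typecheck.
  rewrite <- (comp_assoc s2' (Comp s1' s2')), <- (comp_assoc s1' (Comp s2' s1')) by typecheck.
  rewrite yang_baxter_inv. reflexivity.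
Qed.

Lemma coassociative_cpow D z : wt D 1 2 -> coassociative D -> coassociative (Comp (cpow z) D).
Proof.
  intros HD H. revert z.
  apply (zpow_ind (dc := dc) 2 c ci ltac:(typecheck) ltac:(typecheck)
           (fun t => coassociative (Comp t D)));
    [rewrite id_comp by typecheck; exact H | |];
    intros t Ht Hind; rewrite comp_assoc by typecheck;
    [apply coassociative_braid | apply coassociative_braid_inv]; auto; typecheck.
Qed.

Lemma counital_braid e D : wt e 1 0 -> wt D 1 2 -> counital e D -> counital e (Comp c D).
Proof.
  unfold counital; intros He HD [H1 H2].
  assert (E1 : Comp (Tens I1 e) c == Tens e I1).
  { rewrite <- (braid_natural e I1 1 0 1 1 He ltac:(typecheck)), braid_0_l, id_comp
      by typecheck. reflexivity. }
  assert (E2 : Comp (Tens e I1) c == Tens I1 e).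
  { rewrite <- (braid_natural I1 e 1 1 1 0 ltac:(typecheck) He), braid_0_r, id_comp
      by typecheck. reflexivity. }
  split; rewrite <- comp_assoc by typecheck; [rewrite E1 | rewrite E2]; auto.
Qed.

Lemma counital_braid_inv e D : wt e 1 0 -> wt D 1 2 -> counital e D -> counital e (Comp ci D).
Proof.
  unfold counital; intros He HD [H1 H2].
  assert (E1 : Comp (Tens I1 e) ci == Tens e I1).
  { rewrite <- (braid_inv_natural I1 e 1 1 1 0 ltac:(typecheck) He).
    rewrite (braid_inv_of_id 1 0), id_comp by (typecheck || apply braid_0_r). reflexivity. }
  assert (E2 : Comp (Tens e I1) ci == Tens I1 e).
  { rewrite <- (braid_inv_natural e I1 1 0 1 1 He ltac:(typecheck)).
    rewrite (braid_inv_of_id 0 1), id_comp by (typecheck || apply braid_0_l). reflexivity. }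
  split; rewrite <- comp_assoc by typecheck; [rewrite E1 | rewrite E2]; auto.
Qed.

Lemma counital_cpow e D z : wt e 1 0 -> wt D 1 2 -> counital e D -> counital e (Comp (cpow z) D).
Proof.
  intros He HD H. revert z.
  apply (zpow_ind (dc := dc) 2 c ci ltac:(typecheck) ltac:(typecheck)
           (fun t => counital e (Comp t D)));
    [rewrite id_comp by typecheck; exact H | |];
    intros t Ht Hind; rewrite comp_assoc by typecheck;
    [apply counital_braid | apply counital_braid_inv]; auto; typecheck.
Qed.
End BraidPowers.

(** * Sliding powers of S through morphisms of D *)

Lemma eqv_ty {G} {dc : G -> nat * nat} {R} : (forall f g, R f g -> ty dc f = ty dc g) ->
  forall f g, eqv dc R f g -> ty dc f = ty dc g.
Proof.
  intros HR f g H; induction H; try congruence;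
    try (simpl; rewrite ?IHeqv1, ?IHeqv2; auto; fail); auto; typecheck.
Qed.

Lemma eqvD_ty f g : eqvD f g -> ty dcD f = ty dcD g.
Proof. apply eqv_ty; destruct 1; reflexivity. Qed.

Lemma eqvS_ty f g : eqvS f g -> ty dcDS f = ty dcDS g.
Proof. apply eqv_ty; destruct 1; reflexivity. Qed.

Definition src {G} (dc : G -> nat * nat) (f : term G) : nat :=
  match ty dc f with Some (a, _) => a | None => 0 end.

Lemma src_wt {G} {dc : G -> nat * nat} f a b : wt dc f a b -> src dc f = a.
Proof. unfold src, wt; intros ->; auto. Qed.

Lemma firstn_app_length {A} (l1 l2 : list A) n : length l1 = n -> firstn n (l1 ++ l2) = l1.
Proof. intros <-. rewrite firstn_app, Nat.sub_diag, firstn_O, app_nil_r, firstn_all. auto. Qed.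

Lemma skipn_app_length {A} (l1 l2 : list A) n : length l1 = n -> skipn n (l1 ++ l2) = l2.
Proof. intros <-. rewrite skipn_app, Nat.sub_diag, skipn_O, skipn_all. auto. Qed.

Lemma list_split_length {A} (k : list A) a c : length k = a + c ->
  exists l1 l2, k = l1 ++ l2 /\ length l1 = a /\ length l2 = c.
Proof.
  intro L. exists (firstn a k), (skipn a k).
  rewrite firstn_skipn, length_firstn, length_skipn. split; auto; lia.
Qed.

(* [ι (omega_twist t) = ω₊ ∘ (S^t ⊗ id)] in D^S, as [S] turns [ω₊] into [ω₋] and
   [ω₋] into [ω₊ ∘ τ⁻¹]. *)
Definition omega_twist (t : Z) : term genD :=
  Comp (Gen (gOmega (Z.even t))) (cpow (- (t / 2))).

Lemma omega_twist_ty t : ty dcD (omega_twist t) = Some (2, 0).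
Proof. unfold omega_twist; typecheck. Qed.
Hint Rewrite omega_twist_ty : ty_db.

(* [push g k] slides [S^k₁ ⊗ ... ⊗ S^kₙ] from the source of [g] to its target:
   [g ∘ S^k = S^k' ∘ g'] for [(g', k') = push g k] (see [iota_push]). *)
Fixpoint push (g : term genD) (k : list Z) : term genD * list Z :=
  match g with
  | Gen gDelta => let a := hd 0%Z k in (Comp (cpow a) (Gen gDelta), [a; a])
  | Gen gEps => (Gen gEps, [])
  | Gen (gTheta b) => (Gen (gTheta b), [])
  | Gen (gOmega b) => (omega_twist (nth 0 k 0 + nth 1 k 0 + (if b then 0 else 1))%Z, [])
  | Id n => (Id n, k)
  | Comp f h => let p := push h k in let q := push f (snd p) in (Comp (fst q) (fst p), snd q)
  | Tens f h =>
      let a := src dcD f in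
      let p := push f (firstn a k) in
      let q := push h (skipn a k) in
      (Tens (fst p) (fst q), snd p ++ snd q)
  | Braid m n => (Braid m n, skipn m k ++ firstn m k)
  | BraidInv m n => (BraidInv m n, skipn n k ++ firstn n k)
  end.

Lemma push_ty g k : ty dcD (fst (push g k)) = ty dcD g.
Proof.
  revert k; induction g; intro k; simpl; auto.
  - destruct g; simpl; auto; typecheck.
  - rewrite IHg1, IHg2. reflexivity.
  - rewrite IHg1, IHg2. reflexivity.
Qed.
Hint Rewrite push_ty : ty_db.

Lemma push_wt g k n m : wt dcD g n m -> wt dcD (fst (push g k)) n m.
Proof. unfold wt; rewrite push_ty; auto. Qed.

Lemma push_length g : forall k n m, wt dcD g n m -> length k = n -> length (snd (push g k)) = m.
Proof.
  induction g; intros k n0 m0 H L; simpl.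
  - destruct g; unfold wt in H; simpl in H; inversion H; subst; simpl; auto.
  - unfold wt in H; simpl in H; inversion H; subst; auto.
  - apply wt_comp_inv in H as [p [H1 H2]]. eauto.
  - apply wt_tens_inv in H as [a [b [c [d [H1 [H2 [-> ->]]]]]]].
    rewrite (src_wt _ _ _ H1), length_app.
    erewrite IHg1, IHg2; eauto; [rewrite length_skipn | rewrite length_firstn]; lia.
  - unfold wt in H; simpl in H; inversion H; subst.
    rewrite length_app, length_skipn, length_firstn. lia.
  - unfold wt in H; simpl in H; inversion H; subst.
    rewrite length_app, length_skipn, length_firstn. lia.
Qed.

Lemma push_id n k : push (Id n) k = (Id n, k).
Proof. reflexivity. Qed.

Lemma push_comp f h k : push (Comp f h) k =
  (Comp (fst (push f (snd (push h k)))) (fst (push h k)), snd (push f (snd (push h k)))).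
Proof. reflexivity. Qed.

Lemma push_tens f h A B : length A = src dcD f ->
  push (Tens f h) (A ++ B) =
  (Tens (fst (push f A)) (fst (push h B)), snd (push f A) ++ snd (push h B)).
Proof. intro L. simpl. rewrite firstn_app_length, skipn_app_length by auto. reflexivity. Qed.

Lemma push_braid m n A B : length A = m -> push (Braid m n) (A ++ B) = (Braid m n, B ++ A).
Proof. intro L. simpl. rewrite firstn_app_length, skipn_app_length by auto. reflexivity. Qed.

Lemma push_braid_inv m n A B : length A = n ->
  push (BraidInv m n) (A ++ B) = (BraidInv m n, B ++ A).
Proof. intro L. simpl. rewrite firstn_app_length, skipn_app_length by auto. reflexivity. Qed.

Definition eqv_pair (p q : term genD * list Z) := eqvD (fst p) (fst q) /\ snd p = snd q.

#[global] Instance eqv_pair_Equivalence : Equivalence eqv_pair.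
Proof.
  split; unfold eqv_pair.
  - split; reflexivity.
  - intros p q [H1 H2]; split; symmetry; auto.
  - intros p q r [H1 H2] [H3 H4]; split; [rewrite H1; auto | congruence].
Qed.

Ltac src_length :=
  unfold src, wt in *; cbn [ty]; autorewrite with ty_db;
  repeat match goal with H : ty _ ?f = Some _ |- context [ty _ ?f] => rewrite H end;
  simpl; eqb_true; rewrite ?length_app, ?length_firstn, ?length_skipn; lia.

Ltac split_vec v a b A B :=
  destruct (list_split_length v a b) as [A [B [-> [? ?]]]]; [lia|].

Ltac wt_determine Hw n m :=
  let E := fresh in
  lazymatch type of Hw with wt ?dc ?t _ _ => assert (E : wt dc t n m) by typecheck end;
  destruct (wt_unique _ _ _ _ _ Hw E); subst.

Lemma push_relD f g n m k : relD f g -> wt dcD f n m -> length k = n ->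
  eqv_pair (push f k) (push g k).
Proof.
  intros H Hw L; destruct H; unfold wt in Hw; simpl in Hw; injection Hw as <- <-;
    destruct k as [|x [|y rest]]; simpl in L; try lia; unfold src; split; simpl; auto.
  - apply coassociative_cpow; [typecheck | apply e_rel; constructor].
  - apply (counital_cpow EpsD); [typecheck | typecheck | split; apply e_rel; constructor].
  - apply (counital_cpow EpsD); [typecheck | typecheck | split; apply e_rel; constructor].
Qed.

Lemma push_tens_assoc f g h a b c d e k v : wt dcD f a b -> wt dcD g c d -> wt dcD h e k ->
  length v = a + c + e ->
  eqv_pair (push (Tens (Tens f g) h) v) (push (Tens f (Tens g h)) v).
Proof.
  intros Hf Hg Hh L. split_vec v (a + c) e AB C. split_vec AB a c A B.
  rewrite (push_tens (Tens f g)), push_tens, <- (app_assoc A B C), !push_tens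
    by src_length.
  split; simpl; [apply tens_assoc; typecheck | symmetry; apply app_assoc].
Qed.

Lemma push_interchange f f' g g' a b c a' b' c' v :
  wt dcD g a b -> wt dcD f b c -> wt dcD g' a' b' -> wt dcD f' b' c' -> length v = a + a' ->
  eqv_pair (push (Comp (Tens f f') (Tens g g')) v) (push (Tens (Comp f g) (Comp f' g')) v).
Proof.
  intros Hg Hf Hg' Hf' L. split_vec v a a' A B.
  assert (LgA : length (snd (push g A)) = b) by (eapply push_length; eauto).
  rewrite push_comp, (push_tens g), (push_tens (Comp f g)) by src_length.
  cbn [fst snd]. rewrite push_tens by src_length.
  split; simpl; auto. apply tens_comp. typecheck.
Qed.

Lemma push_braid_natural f g a b c d v : wt dcD f a b -> wt dcD g c d -> length v = a + c ->
  eqv_pair (push (Comp (Braid b d) (Tens f g)) v) (push (Comp (Tens g f) (Braid a c)) v).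
Proof.
  intros Hf Hg L. split_vec v a c A B.
  assert (LfA : length (snd (push f A)) = b) by (eapply push_length; eauto).
  rewrite !push_comp, push_tens, push_braid by src_length.
  cbn [fst snd]. rewrite push_braid, push_tens by src_length.
  split; simpl; auto. apply braid_natural; apply push_wt; auto.
Qed.

Lemma push_braid_inv_braid m n v : length v = m + n ->
  eqv_pair (push (Comp (BraidInv m n) (Braid m n)) v) (push (Id (m + n)) v).
Proof.
  intro L. split_vec v m n A B.
  rewrite push_comp, push_braid by lia. cbn [fst snd]. rewrite push_braid_inv by lia.
  split; [apply e_braid_inv1 | reflexivity].
Qed.

Lemma push_braid_braid_inv m n v : length v = n + m ->
  eqv_pair (push (Comp (Braid m n) (BraidInv m n)) v) (push (Id (n + m)) v).
Proof.
  intro L. split_vec v n m A B.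
  rewrite push_comp, push_braid_inv by lia. cbn [fst snd]. rewrite push_braid by lia.
  split; [apply e_braid_inv2 | reflexivity].
Qed.

Lemma push_hexagon1 m n p v : length v = m + (n + p) ->
  eqv_pair (push (Braid m (n + p)) v)
    (push (Comp (Tens (Id n) (Braid m p)) (Tens (Braid m n) (Id p))) v).
Proof.
  intro L. split_vec v m (n + p) A BC. split_vec BC n p B C.
  rewrite push_braid, push_comp, (app_assoc A), push_tens, push_braid by src_length.
  cbn [fst snd]. rewrite !push_id. cbn [fst snd].
  rewrite <- (app_assoc B A C), push_tens, push_braid by src_length.
  split; simpl; [apply e_hex1 | rewrite <- app_assoc; reflexivity].
Qed.

Lemma push_hexagon2 m n p v : length v = m + n + p ->
  eqv_pair (push (Braid (m + n) p) v)
    (push (Comp (Tens (Braid m p) (Id n)) (Tens (Id m) (Braid n p))) v).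
Proof.
  intro L. split_vec v (m + n) p AB C. split_vec AB m n A B.
  rewrite push_braid, push_comp, <- (app_assoc A), push_tens, push_braid by src_length.
  cbn [fst snd]. rewrite !push_id. cbn [fst snd].
  rewrite (app_assoc A C B), push_tens, push_braid by src_length.
  split; simpl; [apply e_hex2 | rewrite <- !app_assoc; reflexivity].
Qed.

Lemma push_eqv g h : eqvD g h ->
  forall n m k, wt dcD g n m -> length k = n -> eqv_pair (push g k) (push h k).
Proof.
  unfold eqvD. induction 1; intros n0 m0 v Hw L.
  - reflexivity.
  - symmetry. apply (IHeqv n0 m0); auto. unfold wt in *. rewrite (eqvD_ty _ _ H). auto.
  - etransitivity; [apply (IHeqv1 n0 m0) | apply (IHeqv2 n0 m0)]; auto.
    unfold wt in *. rewrite <- (eqvD_ty _ _ H). auto.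
  - apply wt_comp_inv in Hw as [p [Hg Hf]].
    destruct (IHeqv2 n0 p v) as [E1 E2]; auto.
    destruct (IHeqv1 p m0 (snd (push g v))) as [E3 E4]; [auto | eapply push_length; eauto |].
    rewrite !push_comp, <- E2. split; simpl; [rewrite E1, E3; reflexivity | auto].
  - apply wt_tens_inv in Hw as [a [b [c [d [Hf [Hg [-> ->]]]]]]].
    assert (Hf' : wt dcD f' a b) by (unfold wt in *; rewrite <- (eqvD_ty _ _ H); auto).
    split_vec v a c A B. rewrite !push_tens by src_length.
    destruct (IHeqv1 a b A) as [E1 E2]; auto.
    destruct (IHeqv2 c d B) as [E3 E4]; auto.
    split; simpl; [rewrite E1, E3; reflexivity | congruence].
  - eapply push_relD; eauto.
  - split; simpl; auto. apply id_comp. typecheck.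
  - split; simpl; auto. apply comp_id. typecheck.
  - split; simpl; auto. symmetry; apply comp_assoc. typecheck.
  - wt_determine Hw (a + c + e) (b + d + k). eapply push_tens_assoc; eauto.
  - unfold src; split; simpl; auto. apply tens_id0_l. typecheck.
  - wt_determine Hw a b.
    rewrite <- (app_nil_r v) at 1. rewrite push_tens by src_length.
    split; simpl; [apply tens_id0_r; typecheck | apply app_nil_r].
  - wt_determine Hw (m + n) (m + n).
    split_vec v m n A B. rewrite push_tens by src_length. split; [apply e_tid | reflexivity].
  - wt_determine Hw (a + a') (c + c'). eapply push_interchange; eauto.
  - wt_determine Hw (a + c) (d + b). eapply push_braid_natural; eauto.
  - wt_determine Hw (m + n) (m + n). apply push_braid_inv_braid; auto.
  - wt_determine Hw (n + m) (n + m). apply push_braid_braid_inv; auto.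
  - wt_determine Hw (m + (n + p)) (n + p + m). apply push_hexagon1; auto.
  - wt_determine Hw (m + n + p) (p + (m + n)). apply push_hexagon2; auto.
Qed.

Definition zeros n : list Z := repeat 0%Z n.

Fixpoint vadd (a b : list Z) : list Z :=
  match a, b with x :: a', y :: b' => (x + y)%Z :: vadd a' b' | _, _ => [] end.

Lemma zeros_length n : length (zeros n) = n.
Proof. apply repeat_length. Qed.

Lemma zeros_app m n : zeros (m + n) = zeros m ++ zeros n.
Proof. apply repeat_app. Qed.

Lemma vadd_length a b : length (vadd a b) = min (length a) (length b).
Proof. revert b; induction a; intros [|y b]; simpl; auto. Qed.

Lemma vadd_app a1 a2 b1 b2 : length a1 = length b1 ->
  vadd (a1 ++ a2) (b1 ++ b2) = vadd a1 b1 ++ vadd a2 b2.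
Proof.
  revert b1; induction a1; intros [|y b1]; simpl; intros; try discriminate; auto.
  f_equal; auto.
Qed.

Lemma vadd_zeros_l a : vadd (zeros (length a)) a = a.
Proof. induction a; simpl; auto. unfold zeros in *; simpl; rewrite IHa; auto. Qed.

Lemma vadd_zeros_r a : vadd a (zeros (length a)) = a.
Proof. induction a; simpl; auto. unfold zeros in *; simpl; rewrite IHa, Z.add_0_r; auto. Qed.

Lemma vadd_assoc a b c : vadd a (vadd b c) = vadd (vadd a b) c.
Proof.
  revert b c; induction a; intros [|y b] [|z c]; simpl; auto.
  rewrite IHa, Z.add_assoc; auto.
Qed.

Lemma push_zeros g : forall n m, wt dcD g n m -> eqv_pair (push g (zeros n)) (g, zeros m).
Proof.
  induction g; intros n0 m0 H.
  - destruct g; unfold wt in H; simpl in H; injection H as <- <-; split; simpl; auto.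
    + apply id_comp; typecheck.
    + reflexivity.
    + destruct plus; unfold omega_twist; simpl; apply comp_id; typecheck.
    + reflexivity.
  - unfold wt in H; simpl in H; injection H as <- <-; split; simpl; auto; reflexivity.
  - apply wt_comp_inv in H as [p [H1 H2]].
    destruct (IHg2 _ _ H1) as [E1 E2]. rewrite push_comp, E2.
    destruct (IHg1 _ _ H2) as [E3 E4]. split; simpl; auto. rewrite E1, E3; reflexivity.
  - apply wt_tens_inv in H as [a [b [c [d [H1 [H2 [-> ->]]]]]]].
    rewrite zeros_app, push_tens by (rewrite zeros_length; src_length).
    destruct (IHg1 _ _ H1) as [E1 E2]. destruct (IHg2 _ _ H2) as [E3 E4].
    split; simpl; [rewrite E1, E3; reflexivity | rewrite E2, E4, zeros_app; auto].
  - unfold wt in H; simpl in H; injection H as <- <-.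
    rewrite zeros_app, push_braid by apply zeros_length.
    split; simpl; [reflexivity | rewrite <- zeros_app; f_equal; lia].
  - unfold wt in H; simpl in H; injection H as <- <-.
    rewrite zeros_app, push_braid_inv by apply zeros_length.
    split; simpl; [reflexivity | rewrite <- zeros_app; f_equal; lia].
Qed.

Lemma length_1 (l : list Z) : length l = 1 -> exists x, l = [x].
Proof. destruct l as [|x [|]]; simpl; intros; try lia; eauto. Qed.

Lemma length_2 (l : list Z) : length l = 2 -> exists x y, l = [x; y].
Proof. destruct l as [|x [|y [|]]]; simpl; intros; try lia; eauto. Qed.

Lemma push_npow_swap w m y1 y2 : (forall u v, push w [u; v] = (w, [v; u])) ->
  push (npow 2 w m) [y1; y2] = (npow 2 w m, [y1; y2]) \/
  push (npow 2 w m) [y1; y2] = (npow 2 w m, [y2; y1]).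
Proof.
  intro Hw. induction m as [|m [IH | IH]]; simpl npow; auto;
    rewrite push_comp, IH; simpl; rewrite Hw; auto.
Qed.

Lemma push_cpow z y1 y2 :
  push (cpow z) [y1; y2] = (cpow z, [y1; y2]) \/ push (cpow z) [y1; y2] = (cpow z, [y2; y1]).
Proof. unfold cpow, zpow; destruct z; auto; apply push_npow_swap; reflexivity. Qed.

Lemma push_cpow_diag z y : push (cpow z) [y; y] = (cpow z, [y; y]).
Proof. destruct (push_cpow z y y) as [E | E]; exact E. Qed.

Lemma Z_div2_add x y : let r := if Z.even x then 0%Z else 1%Z in
  Z.even (x + y) = Z.even (y + r) /\ (- ((x + y) / 2) = - ((y + r) / 2) + - (x / 2))%Z.
Proof.
  destruct (Z.Even_or_Odd x) as [[q ->]|[q ->]]; cbv zeta;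
    rewrite !Z.even_add, Z.even_even; change (Z.even 0) with true; change (Z.even 1) with false;
    cbn [Bool.eqb];
    (split; [destruct (Z.even y); reflexivity | Z.div_mod_to_equations; lia]).
Qed.

Lemma omega_twist_add x y :
  eqvD (omega_twist (x + y))
    (Comp (omega_twist (y + (if Z.even x then 0 else 1))) (cpow (- (x / 2)))).
Proof.
  destruct (Z_div2_add x y) as [Hev Hdiv]. unfold omega_twist.
  rewrite comp_assoc, cpow_add, Hev, Hdiv by typecheck. reflexivity.
Qed.

Definition push_twice (g : term genD) (a b : list Z) : term genD * list Z :=
  let p := push g a in let q := push (fst p) b in (fst q, vadd (snd p) (snd q)).

Lemma push_vadd_gen x a b n m : wt dcD (Gen x) n m -> length a = n -> length b = n ->
  eqv_pair (push (Gen x) (vadd a b)) (push_twice (Gen x) a b).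
Proof.
  unfold push_twice; intros H La Lb.
  destruct x; unfold wt in H; simpl in H; injection H as <- <-; try (split; reflexivity).
  - destruct (length_1 a La) as [x ->], (length_1 b Lb) as [y ->].
    simpl. rewrite push_cpow_diag. split; simpl; auto.
    rewrite <- comp_assoc, cpow_add by typecheck. reflexivity.
  - destruct (length_2 a La) as [x1 [x2 ->]], (length_2 b Lb) as [y1 [y2 ->]].
    simpl. set (tx := (x1 + x2 + (if plus then 0 else 1))%Z).
    destruct (push_cpow (- (tx / 2)) y1 y2) as [E | E]; rewrite E; split; simpl; auto;
      [ replace (x1 + y1 + (x2 + y2) + (if plus then 0 else 1))%Z with (tx + (y1 + y2))%Z
          by (unfold tx; lia)
      | replace (x1 + y1 + (x2 + y2) + (if plus then 0 else 1))%Z with (tx + (y2 + y1))%Z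
          by (unfold tx; lia) ];
      apply omega_twist_add.
Qed.

Lemma push_vadd g : forall n m a b, wt dcD g n m -> length a = n -> length b = n ->
  eqv_pair (push g (vadd a b)) (push_twice g a b).
Proof.
  unfold push_twice; induction g; intros n0 m0 a b H La Lb.
  - eapply push_vadd_gen; eauto.
  - split; reflexivity.
  - apply wt_comp_inv in H as [p [H1 H2]].
    destruct (IHg2 _ _ _ _ H1 La Lb) as [E1 E2].
    assert (L1 : length (snd (push g2 a)) = p) by (eapply push_length; eauto).
    assert (L2 : length (snd (push (fst (push g2 a)) b)) = p)
      by (eapply push_length; eauto using push_wt).
    destruct (IHg1 _ _ _ _ H2 L1 L2) as [E3 E4].
    rewrite !push_comp, E2. split; simpl; [rewrite E1, E3; reflexivity | auto].
  - apply wt_tens_inv in H as [a0 [b0 [c0 [d0 [H1 [H2 [-> ->]]]]]]].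
    split_vec a a0 c0 A1 A2. split_vec b a0 c0 B1 B2.
    assert (Hf' : wt dcD (fst (push g1 A1)) a0 b0) by (apply push_wt; auto).
    rewrite vadd_app, !push_tens by (rewrite ?vadd_length; src_length).
    cbn [fst snd]. rewrite push_tens by src_length.
    destruct (IHg1 _ _ A1 B1 H1) as [E1 E2]; auto.
    destruct (IHg2 _ _ A2 B2 H2) as [E3 E4]; auto.
    cbn [fst snd] in *.
    split; simpl; [rewrite E1, E3; reflexivity|].
    rewrite E2, E4, vadd_app; auto.
    rewrite (push_length _ _ _ _ H1), (push_length _ _ _ _ Hf'); auto.
  - unfold wt in H; simpl in H; injection H as <- <-.
    split_vec a m n A1 A2. split_vec b m n B1 B2.
    rewrite vadd_app, !push_braid by (rewrite ?vadd_length; lia).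
    cbn [fst snd]. rewrite push_braid by lia.
    split; simpl; [reflexivity | symmetry; apply vadd_app; lia].
  - unfold wt in H; simpl in H; injection H as <- <-.
    split_vec a n m A1 A2. split_vec b n m B1 B2.
    rewrite vadd_app, !push_braid_inv by (rewrite ?vadd_length; lia).
    cbn [fst snd]. rewrite push_braid_inv by lia.
    split; simpl; [reflexivity | symmetry; apply vadd_app; lia].
Qed.

(** * Normal forms of morphisms of D^S *)

(* [interp f = (g, k)] encodes [f = (S^k₁ ⊗ ... ⊗ S^kₘ) ∘ ι g] (see [interp_spec]). *)
Fixpoint interp (f : term genDS) : term genD * list Z :=
  match f with
  | Gen (gOld g) => (Gen g, zeros (snd (dcD g)))
  | Gen gS => (Id 1, [1%Z])
  | Gen gSinv => (Id 1, [(-1)%Z])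
  | Id n => (Id n, zeros n)
  | Comp f h =>
      let p := interp f in let q := interp h in let r := push (fst p) (snd q) in
      (Comp (fst r) (fst q), vadd (snd p) (snd r))
  | Tens f h => (Tens (fst (interp f)) (fst (interp h)), snd (interp f) ++ snd (interp h))
  | Braid m n => (Braid m n, zeros (n + m))
  | BraidInv m n => (BraidInv m n, zeros (m + n))
  end.

Lemma interp_comp f h : interp (Comp f h) =
  (Comp (fst (push (fst (interp f)) (snd (interp h)))) (fst (interp h)),
   vadd (snd (interp f)) (snd (push (fst (interp f)) (snd (interp h))))).
Proof. reflexivity. Qed.

Lemma interp_ty f : ty dcD (fst (interp f)) = ty dcDS f.
Proof.
  induction f; simpl; auto.
  - destruct g; simpl; auto.
  - rewrite push_ty, IHf1, IHf2. auto.
  - rewrite IHf1, IHf2. auto.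
Qed.
Hint Rewrite interp_ty : ty_db.

Lemma interp_wt f n m : wt dcDS f n m -> wt dcD (fst (interp f)) n m.
Proof. unfold wt; rewrite interp_ty; auto. Qed.

Lemma interp_length f : forall n m, wt dcDS f n m -> length (snd (interp f)) = m.
Proof.
  induction f; intros n0 m0 H.
  - destruct g as [[]| |]; unfold wt in H; simpl in H; injection H as <- <-; simpl; auto.
  - unfold wt in H; simpl in H; injection H as <- <-; apply zeros_length.
  - apply wt_comp_inv in H as [p [H1 H2]]. simpl. rewrite vadd_length.
    rewrite (IHf1 _ _ H2). erewrite push_length; eauto using interp_wt. lia.
  - apply wt_tens_inv in H as [a [b [c [d [H1 [H2 [-> ->]]]]]]]. simpl.
    rewrite length_app; erewrite IHf1, IHf2; eauto.
  - unfold wt in H; simpl in H; injection H as <- <-; apply zeros_length.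
  - unfold wt in H; simpl in H; injection H as <- <-; apply zeros_length.
Qed.

Lemma iota_ty g : ty dcDS (iota g) = ty dcD g.
Proof. induction g; simpl; auto; unfold iota in *; rewrite IHg1, IHg2; auto. Qed.
Hint Rewrite iota_ty : ty_db.

Lemma iota_wt g n m : wt dcD g n m -> wt dcDS (iota g) n m.
Proof. unfold wt; rewrite iota_ty; auto. Qed.

Lemma vadd_zeros n : vadd (zeros n) (zeros n) = zeros n.
Proof. rewrite <- (zeros_length n) at 2. apply vadd_zeros_r. Qed.

Lemma interp_iota g : forall n m, wt dcD g n m -> eqv_pair (interp (iota g)) (g, zeros m).
Proof.
  induction g; intros n0 m0 H.
  - unfold wt in H; simpl in H; injection H as E. simpl. rewrite E. reflexivity.
  - unfold wt in H; simpl in H; injection H as <- <-. reflexivity.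
  - apply wt_comp_inv in H as [p [H1 H2]].
    change (iota (Comp g1 g2)) with (Comp (iota g1) (iota g2)). rewrite interp_comp.
    destruct (IHg1 _ _ H2) as [E1 E2], (IHg2 _ _ H1) as [E3 E4]. cbn [fst snd] in *.
    rewrite E4, E2.
    assert (Hw : wt dcD (fst (interp (iota g1))) p m0) by (apply interp_wt, iota_wt; auto).
    destruct (push_eqv _ _ E1 p m0 (zeros p) Hw (zeros_length p)) as [E5 E6].
    destruct (push_zeros _ _ _ H2) as [E7 E8].
    split; cbn [fst snd].
    + rewrite E5, E7, E3. reflexivity.
    + rewrite E6, E8. apply vadd_zeros.
  - apply wt_tens_inv in H as [a [b [c [d [H1 [H2 [-> ->]]]]]]].
    change (iota (Tens g1 g2)) with (Tens (iota g1) (iota g2)).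
    destruct (IHg1 _ _ H1) as [E1 E2], (IHg2 _ _ H2) as [E3 E4].
    split; cbn [interp fst snd] in *;
      [rewrite E1, E3; reflexivity | rewrite E2, E4, zeros_app; auto].
  - unfold wt in H; simpl in H; injection H as <- <-. reflexivity.
  - unfold wt in H; simpl in H; injection H as <- <-. reflexivity.
Qed.

Lemma interp_iota_eqv g h n m : eqvD g h -> wt dcD g n m ->
  eqv_pair (interp (iota g)) (interp (iota h)).
Proof.
  intros E H. assert (H' : wt dcD h n m) by (unfold wt in *; rewrite <- (eqvD_ty _ _ E); auto).
  rewrite (interp_iota _ _ _ H), (interp_iota _ _ _ H'). split; [exact E | reflexivity].
Qed.

Lemma interp_relDS f g : relDS f g -> eqv_pair (interp f) (interp g).
Proof.
  destruct 1; split; simpl; unfold src; simpl; try reflexivity;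
    unfold omega_twist; simpl;
    repeat first [rewrite id_comp by typecheck | rewrite comp_id by typecheck
                 | rewrite (e_tid dcD relD 1 1); simpl];
    try reflexivity; apply e_rel; constructor.
Qed.

Lemma interp_assoc f g h a b c d : wt dcDS h a b -> wt dcDS g b c -> wt dcDS f c d ->
  eqv_pair (interp (Comp f (Comp g h))) (interp (Comp (Comp f g) h)).
Proof.
  intros Hh Hg Hf. rewrite !interp_comp.
  assert (L1 : length (snd (interp g)) = c) by (eapply interp_length; eauto).
  assert (L2 : length (snd (push (fst (interp g)) (snd (interp h)))) = c)
    by (eapply push_length; eauto using interp_wt, interp_length).
  destruct (push_vadd _ _ _ _ _ (interp_wt _ _ _ Hf) L1 L2) as [E1 E2].
  unfold push_twice in *. cbn [fst snd] in *. rewrite push_comp.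
  split; simpl.
  - rewrite E1. symmetry; apply comp_assoc; typecheck.
  - rewrite E2. apply vadd_assoc.
Qed.

Lemma interp_interchange f f' g g' a b c a' b' c' :
  wt dcDS g a b -> wt dcDS f b c -> wt dcDS g' a' b' -> wt dcDS f' b' c' ->
  eqv_pair (interp (Comp (Tens f f') (Tens g g'))) (interp (Tens (Comp f g) (Comp f' g'))).
Proof.
  intros Hg Hf Hg' Hf'. rewrite !interp_comp. cbn [interp fst snd].
  assert (Lg : length (snd (interp g)) = b) by (eapply interp_length; eauto).
  rewrite push_tens by (rewrite Lg; src_length).
  split; simpl; [apply tens_comp; typecheck|].
  apply vadd_app. rewrite (interp_length _ _ _ Hf).
  symmetry; eapply push_length; eauto using interp_wt.
Qed.

Lemma interp_braid_natural f g a b c d : wt dcDS f a b -> wt dcDS g c d ->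
  eqv_pair (interp (Comp (Braid b d) (Tens f g))) (interp (Comp (Tens g f) (Braid a c))).
Proof.
  intros Hf Hg. rewrite !interp_comp. cbn [interp fst snd].
  assert (Lf : length (snd (interp f)) = b) by (eapply interp_length; eauto).
  assert (Lg : length (snd (interp g)) = d) by (eapply interp_length; eauto).
  rewrite push_braid by auto.
  destruct (push_zeros (Tens (fst (interp g)) (fst (interp f))) (c + a) (d + b)) as [E1 E2];
    [typecheck|].
  rewrite zeros_app, E2.
  split; cbn [fst snd].
  - rewrite E1. apply braid_natural; apply interp_wt; auto.
  - rewrite <- Lf, <- Lg, <- zeros_app, <- length_app, vadd_zeros_l, vadd_zeros_r. reflexivity.
Qed.

Lemma interp_eqv f g : eqvS f g -> forall n m, wt dcDS f n m -> eqv_pair (interp f) (interp g).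
Proof.
  unfold eqvS. induction 1; intros n0 m0 Hw.
  - reflexivity.
  - symmetry. apply (IHeqv n0 m0). unfold wt in *. rewrite (eqvS_ty _ _ H). auto.
  - etransitivity; [apply (IHeqv1 n0 m0) | apply (IHeqv2 n0 m0)]; auto.
    unfold wt in *. rewrite <- (eqvS_ty _ _ H). auto.
  - apply wt_comp_inv in Hw as [p [Hg Hf]]. rewrite !interp_comp.
    destruct (IHeqv1 _ _ Hf) as [E1 E2], (IHeqv2 _ _ Hg) as [E3 E4].
    rewrite <- E4.
    destruct (push_eqv _ _ E1 p m0 (snd (interp g))) as [E5 E6];
      [apply interp_wt; auto | eapply interp_length; eauto |].
    split; simpl; [rewrite E5, E3; reflexivity | congruence].
  - apply wt_tens_inv in Hw as [a [b [c [d [Hf [Hg [-> ->]]]]]]].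
    destruct (IHeqv1 _ _ Hf) as [E1 E2], (IHeqv2 _ _ Hg) as [E3 E4].
    split; simpl; [rewrite E1, E3; reflexivity | congruence].
  - apply interp_relDS; auto.
  - rewrite interp_comp. simpl. split; simpl; [apply id_comp; typecheck|].
    rewrite <- (interp_length _ _ _ H). apply vadd_zeros_l.
  - rewrite interp_comp. destruct (push_zeros _ _ _ (interp_wt _ _ _ H)) as [E1 E2].
    simpl. rewrite E2. split; simpl; [rewrite E1; apply comp_id; typecheck|].
    rewrite <- (interp_length _ _ _ H). apply vadd_zeros_r.
  - eapply interp_assoc; eauto.
  - split; simpl; [apply tens_assoc; typecheck | rewrite app_assoc; auto].
  - split; simpl; auto. apply tens_id0_l; typecheck.
  - split; simpl; [apply tens_id0_r; typecheck | apply app_nil_r].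
  - apply (interp_iota_eqv (Tens (Id m) (Id n)) (Id (m + n)) (m + n) (m + n));
      [apply e_tid | typecheck].
  - eapply interp_interchange; eauto.
  - eapply interp_braid_natural; eauto.
  - apply (interp_iota_eqv (Comp (BraidInv m n) (Braid m n)) (Id (m + n)) (m + n) (m + n));
      [apply e_braid_inv1 | typecheck].
  - apply (interp_iota_eqv (Comp (Braid m n) (BraidInv m n)) (Id (n + m)) (n + m) (n + m));
      [apply e_braid_inv2 | typecheck].
  - apply (interp_iota_eqv (Braid m (n + p))
             (Comp (Tens (Id n) (Braid m p)) (Tens (Braid m n) (Id p)))
             (m + (n + p)) (n + p + m));
      [apply e_hex1 | typecheck].
  - apply (interp_iota_eqv (Braid (m + n) p)
             (Comp (Tens (Braid m p) (Id n)) (Tens (Id m) (Braid n p)))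
             (m + n + p) (p + (m + n)));
      [apply e_hex2 | typecheck].
Qed.

(** * Sliding powers of S in D^S *)

Local Notation "f == g" := (eqvS f g) (at level 70).
Local Notation I1 := (@Id genDS 1).
Local Notation c := (@Braid genDS 1 1).
Local Notation ci := (@BraidInv genDS 1 1).

Definition Spow (z : Z) : term genDS := zpow 1 SS SSinv z.

Fixpoint Svec (k : list Z) : term genDS :=
  match k with [] => Id 0 | a :: l => Tens (Spow a) (Svec l) end.

Lemma S_Sinv : Comp SS SSinv == I1.
Proof. apply e_rel; constructor. Qed.

Lemma Sinv_S : Comp SSinv SS == I1.
Proof. apply e_rel; constructor. Qed.

Lemma Spow_ty z : ty dcDS (Spow z) = Some (1, 1).
Proof. apply wt_zpow; reflexivity. Qed.
Hint Rewrite Spow_ty : ty_db.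

Lemma Spow_add a b : Comp (Spow a) (Spow b) == Spow (a + b).
Proof. apply zpow_add; [reflexivity | reflexivity | exact S_Sinv | exact Sinv_S]. Qed.

Lemma Svec_ty k : ty dcDS (Svec k) = Some (length k, length k).
Proof. induction k; simpl; [reflexivity|]. rewrite Spow_ty, IHk; auto. Qed.
Hint Rewrite Svec_ty : ty_db.

Lemma Svec_app l1 l2 : Svec (l1 ++ l2) == Tens (Svec l1) (Svec l2).
Proof.
  induction l1; simpl.
  - symmetry; apply tens_id0_l; typecheck.
  - rewrite IHl1. symmetry; apply tens_assoc; typecheck.
Qed.

Lemma Svec_vadd a b : length a = length b -> Comp (Svec a) (Svec b) == Svec (vadd a b).
Proof.
  revert b; induction a as [|x a IH]; intros [|y b] L; simpl in *; try discriminate.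
  - apply id_comp; typecheck.
  - rewrite tens_comp, Spow_add, IH by (typecheck || lia). reflexivity.
Qed.

Lemma Svec_zeros n : Svec (zeros n) == Id n.
Proof. induction n; simpl; [reflexivity|]. rewrite IHn. apply e_tid. Qed.

Lemma iota_cpow z : iota (cpow z) = cpow z.
Proof.
  assert (E : forall w m, iota (npow 2 w m) = npow 2 (iota w) m)
    by (induction m; simpl; auto; unfold iota in *; simpl; congruence).
  unfold cpow, zpow; destruct z; auto; apply E.
Qed.

Ltac right_assoc := repeat (rewrite comp_assoc by typecheck).

(* When rewriting with [comp_rewrite_prefix X Y], the proof of [Comp X Y == Z] must be
   tried before [typecheck], which would close that premise by reflexivity. *)
Lemma comp_rewrite_prefix X Y Z r : Comp X Y == Z -> ty dcDS (Comp (Comp X Y) r) <> None ->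
  Comp X (Comp Y r) == Comp Z r.
Proof. intros H T. rewrite <- comp_assoc by auto. rewrite H. reflexivity. Qed.

Lemma Delta_S : Comp DeltaS SS == Comp (Tens SS SS) (Comp c DeltaS).
Proof. apply e_rel; constructor. Qed.

Lemma Delta_Sinv : Comp DeltaS SSinv == Comp (Tens SSinv SSinv) (Comp ci DeltaS).
Proof.
  symmetry.
  rewrite <- (comp_id 1 DeltaS) at 1 by typecheck. rewrite <- S_Sinv. right_assoc.
  rewrite (comp_rewrite_prefix DeltaS SS) by first [exact Delta_S | typecheck]. right_assoc.
  rewrite (comp_rewrite_prefix ci (Tens SS SS))
    by first [apply (braid_inv_natural SS SS 1 1 1 1); reflexivity | typecheck].
  right_assoc.
  rewrite (comp_rewrite_prefix ci c), id_comp by first [apply e_braid_inv1 | typecheck].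
  rewrite (comp_rewrite_prefix (Tens SSinv SSinv) (Tens SS SS)), id_comp
    by first [rewrite tens_comp, Sinv_S by typecheck; apply e_tid | typecheck].
  reflexivity.
Qed.

Lemma Delta_npow (u w : term genDS) : wt dcDS u 1 1 -> wt dcDS w 2 2 ->
  (forall A B, wt dcDS A 1 1 -> wt dcDS B 1 1 -> Comp w (Tens A B) == Comp (Tens B A) w) ->
  Comp DeltaS u == Comp (Tens u u) (Comp w DeltaS) ->
  forall m, Comp DeltaS (npow 1 u m) ==
    Comp (Tens (npow 1 u m) (npow 1 u m)) (Comp (npow 2 w m) DeltaS).
Proof.
  intros Hu Hw Hswap HD m. induction m as [|m IHm]; simpl npow.
  - rewrite comp_id, (id_comp 2 DeltaS), e_tid by typecheck.
    symmetry; apply id_comp; typecheck.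
  - pose proof (wt_npow 1 u m Hu). pose proof (wt_npow 2 w m Hw).
    rewrite <- comp_assoc, HD by typecheck. right_assoc. rewrite IHm. right_assoc.
    rewrite (comp_rewrite_prefix w (Tens _ _)) by first [apply Hswap; auto | typecheck].
    right_assoc.
    rewrite (comp_rewrite_prefix (Tens u u) (Tens _ _))
      by first [apply tens_comp; typecheck | typecheck].
    reflexivity.
Qed.

Lemma Delta_Spow z :
  Comp DeltaS (Spow z) == Comp (Tens (Spow z) (Spow z)) (Comp (cpow z) DeltaS).
Proof.
  unfold Spow, cpow. destruct (Z_nat_cases z) as [[m ->]|[m ->]].
  - rewrite !zpow_of_nat. apply Delta_npow; [reflexivity | reflexivity | | exact Delta_S].
    intros; eapply braid_natural; eauto.
  - rewrite !zpow_opp_of_nat. apply Delta_npow; [reflexivity | reflexivity | | exact Delta_Sinv].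
    intros; eapply braid_inv_natural; eauto.
Qed.

Lemma comp_Spow_invariant e z : wt dcDS e 1 0 -> Comp e SS == e -> Comp e (Spow z) == e.
Proof.
  intros He HS.
  assert (HSinv : Comp e SSinv == e).
  { rewrite <- HS at 1. rewrite comp_assoc, S_Sinv, comp_id by typecheck. reflexivity. }
  revert z. apply (zpow_ind (dc := dcDS) 1 SS SSinv ltac:(reflexivity) ltac:(reflexivity)
                  (fun t => Comp e t == e));
    [rewrite comp_id by typecheck; reflexivity | |];
    intros t Ht IH; rewrite <- comp_assoc by typecheck; [rewrite HS | rewrite HSinv]; exact IH.
Qed.

Lemma iota_omega_twist h : iota (omega_twist h) = Comp (OmegaS (Z.even h)) (cpow (- (h / 2))).
Proof.
  unfold omega_twist, iota. simpl. fold (iota (@cpow genD (- (h / 2)))).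
  now rewrite iota_cpow.
Qed.

Lemma tens_inv_l A B : wt dcDS A 1 1 -> wt dcDS B 1 1 -> Comp A B == I1 ->
  Comp (Tens A I1) (Tens B I1) == Id 2.
Proof. intros. rewrite tens_comp, H1, id_comp by typecheck. apply e_tid. Qed.

Lemma tens_id_commute A B : wt dcDS A 1 1 -> wt dcDS B 1 1 ->
  Comp (Tens I1 A) (Tens B I1) == Comp (Tens B I1) (Tens I1 A).
Proof. intros. rewrite !tens_comp, !id_comp, !comp_id by typecheck. reflexivity. Qed.

Lemma omega_plus_S_l : Comp (OmegaS true) (Tens SS I1) == OmegaS false.
Proof. apply e_rel; constructor. Qed.

Lemma omega_plus_S_r : Comp (OmegaS true) (Tens I1 SS) == OmegaS false.
Proof. apply e_rel; constructor. Qed.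

Lemma omega_minus_S_r : Comp (OmegaS false) (Tens I1 SS) == Comp (OmegaS true) ci.
Proof.
  rewrite <- (comp_id 2 (OmegaS false)), <- (e_braid_inv2 dcDS relDS 1 1) by typecheck.
  rewrite <- (comp_assoc (OmegaS false)), <- (e_rel dcDS relDS _ _ rS_omega3) by typecheck.
  right_assoc. rewrite (braid_inv_natural SS I1 1 1 1 1) by reflexivity.
  rewrite <- (comp_assoc (Tens SSinv I1)), tens_inv_l, id_comp by (apply Sinv_S || typecheck).
  reflexivity.
Qed.

Lemma omega_minus_S_l : Comp (OmegaS false) (Tens SS I1) == Comp (OmegaS true) ci.
Proof.
  rewrite <- omega_plus_S_r. right_assoc.
  rewrite tens_id_commute, <- comp_assoc, omega_plus_S_l by typecheck.
  apply omega_minus_S_r.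
Qed.

Lemma omega_S p :
  Comp (OmegaS p) (Tens SS I1) == Comp (OmegaS (negb p)) (cpow (if p then 0 else -1)) /\
  Comp (OmegaS p) (Tens I1 SS) == Comp (OmegaS (negb p)) (cpow (if p then 0 else -1)).
Proof.
  destruct p; simpl; rewrite ?comp_id by typecheck.
  - split; [apply omega_plus_S_l | apply omega_plus_S_r].
  - split; [apply omega_minus_S_l | apply omega_minus_S_r].
Qed.

Lemma Z_succ_div2 h : Z.even (h + 1) = negb (Z.even h) /\
  (- ((h + 1) / 2) = (if Z.even h then 0 else -1) + - (h / 2))%Z.
Proof.
  split; [rewrite Z.add_1_r, Z.even_succ, <- Z.negb_even; reflexivity|].
  destruct (Z.Even_or_Odd h) as [[q ->]|[q ->]];
    [rewrite Z.even_even | rewrite Z.even_odd]; cbv beta iota;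
    Z.div_mod_to_equations; lia.
Qed.

Lemma omega_twist_S h :
  Comp (iota (omega_twist h)) (Tens SS I1) == iota (omega_twist (h + 1)) /\
  Comp (iota (omega_twist h)) (Tens I1 SS) == iota (omega_twist (h + 1)).
Proof.
  rewrite !iota_omega_twist. destruct (Z_succ_div2 h) as [Hev Hdiv]. rewrite Hev, Hdiv.
  destruct (omega_S (Z.even h)) as [HL HR].
  split; rewrite comp_assoc, cpow_swap by typecheck;
    destruct (Z.even (- (h / 2))); rewrite <- comp_assoc, ?HL, ?HR, comp_assoc, cpow_add
      by typecheck; reflexivity.
Qed.

Section OmegaSlot.
(* [slot] will be [fun t => Tens t I1] or [fun t => Tens I1 t]. *)
Variable slot : term genDS -> term genDS.
Hypothesis slot_wt : forall a, wt dcDS a 1 1 -> wt dcDS (slot a) 2 2.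
Hypothesis slot_comp : forall a b, wt dcDS a 1 1 -> wt dcDS b 1 1 ->
  slot (Comp a b) == Comp (slot a) (slot b).
Hypothesis slot_id : slot I1 == Id 2.
Context {slot_Proper : Proper (eqvS ==> eqvS) slot}.
Hypothesis omega_twist_slot_S : forall h,
  Comp (iota (omega_twist h)) (slot SS) == iota (omega_twist (h + 1)).

Lemma omega_twist_slot_Sinv h :
  Comp (iota (omega_twist h)) (slot SSinv) == iota (omega_twist (h + -1)).
Proof.
  pose proof (slot_wt SS ltac:(reflexivity)). pose proof (slot_wt SSinv ltac:(reflexivity)).
  rewrite <- (Z.sub_add 1 h) at 1. rewrite <- omega_twist_slot_S.
  rewrite comp_assoc, <- slot_comp, S_Sinv, slot_id, comp_id by (reflexivity || typecheck).
  reflexivity.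
Qed.

Lemma omega_twist_slot_npow u e : wt dcDS u 1 1 ->
  (forall h, Comp (iota (omega_twist h)) (slot u) == iota (omega_twist (h + e))) ->
  forall m h, Comp (iota (omega_twist h)) (slot (npow 1 u m)) ==
              iota (omega_twist (h + Z.of_nat m * e)).
Proof.
  intros Hu Hstep m. induction m as [|m IHm]; intro h; simpl npow.
  - rewrite slot_id, comp_id by typecheck. f_equiv. f_equal. lia.
  - pose proof (wt_npow 1 u m Hu). pose proof (slot_wt _ Hu). pose proof (slot_wt _ H).
    rewrite slot_comp, <- comp_assoc, Hstep, IHm by typecheck. f_equiv. f_equal. lia.
Qed.

Lemma omega_twist_slot_Spow x h :
  Comp (iota (omega_twist h)) (slot (Spow x)) == iota (omega_twist (h + x)).
Proof.
  unfold Spow. destruct (Z_nat_cases x) as [[m ->]|[m ->]].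
  - rewrite zpow_of_nat, (omega_twist_slot_npow SS 1); [f_equiv; f_equal; lia | reflexivity |].
    exact omega_twist_slot_S.
  - rewrite zpow_opp_of_nat, (omega_twist_slot_npow SSinv (-1));
      [f_equiv; f_equal; lia | reflexivity |].
    exact omega_twist_slot_Sinv.
Qed.
End OmegaSlot.

Lemma omega_twist_Spow_l x h :
  Comp (iota (omega_twist h)) (Tens (Spow x) I1) == iota (omega_twist (h + x)).
Proof.
  apply (omega_twist_slot_Spow (fun t => Tens t I1)).
  - intros; typecheck.
  - intros; eapply comp_tens_id; eauto.
  - apply e_tid.
  - intros ?? E; rewrite E; reflexivity.
  - intro; apply omega_twist_S.
Qed.

Lemma omega_twist_Spow_r x h :
  Comp (iota (omega_twist h)) (Tens I1 (Spow x)) == iota (omega_twist (h + x)).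
Proof.
  apply (omega_twist_slot_Spow (fun t => Tens I1 t)).
  - intros; typecheck.
  - intros; eapply tens_id_comp; eauto.
  - apply e_tid.
  - intros ?? E; rewrite E; reflexivity.
  - intro; apply omega_twist_S.
Qed.

Lemma OmegaS_Spow b x1 x2 :
  Comp (OmegaS b) (Tens (Spow x1) (Spow x2)) ==
  iota (omega_twist (x1 + x2 + (if b then 0 else 1))).
Proof.
  transitivity (Comp (iota (omega_twist (if b then 0 else 1))) (Tens (Spow x1) (Spow x2))).
  - rewrite iota_omega_twist. destruct b; simpl; rewrite comp_id by typecheck; reflexivity.
  - rewrite <- (id_comp 1 (Spow x2)), <- (comp_id 1 (Spow x1)) at 1 by typecheck.
    rewrite <- tens_comp, <- comp_assoc, omega_twist_Spow_l, omega_twist_Spow_r by typecheck.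
    f_equiv. f_equal. lia.
Qed.

Lemma iota_push_gen x n m k : wt dcD (Gen x) n m -> length k = n ->
  Comp (iota (Gen x)) (Svec k) ==
  Comp (Svec (snd (push (Gen x) k))) (iota (fst (push (Gen x) k))).
Proof.
  intros H L. destruct x; unfold wt in H; simpl in H; injection H as <- <-.
  - destruct (length_1 k L) as [x ->]. cbn [push hd fst snd Svec].
    change (iota (Comp (cpow x) DeltaD)) with (Comp (iota (cpow x)) DeltaS).
    rewrite iota_cpow, !(tens_id0_r (Spow x)) by typecheck. apply Delta_Spow.
  - destruct (length_1 k L) as [x ->]. cbn [push fst snd Svec].
    rewrite tens_id0_r, id_comp by typecheck.
    apply comp_Spow_invariant; [reflexivity | apply e_rel; constructor].
  - destruct (length_2 k L) as [x1 [x2 ->]]. cbn [push nth fst snd Svec].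
    rewrite (tens_id0_r (Spow x2)), id_comp by typecheck. apply OmegaS_Spow.
  - destruct (length_1 k L) as [x ->]. cbn [push fst snd Svec].
    rewrite tens_id0_r, id_comp by typecheck.
    apply comp_Spow_invariant; [reflexivity | apply e_rel; constructor].
Qed.

Lemma iota_push g : forall n m k, wt dcD g n m -> length k = n ->
  Comp (iota g) (Svec k) == Comp (Svec (snd (push g k))) (iota (fst (push g k))).
Proof.
  induction g; intros n0 m0 k H L.
  - eapply iota_push_gen; eauto.
  - unfold wt in H; simpl in H; injection H as <- <-. cbn [push fst snd iota tmap].
    rewrite id_comp, comp_id by typecheck. reflexivity.
  - apply wt_comp_inv in H as [p [H1 H2]]. rewrite push_comp. cbn [fst snd].
    change (iota (Comp ?a ?b)) with (Comp (iota a) (iota b)).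
    assert (L1 : length (snd (push g2 k)) = p) by (eapply push_length; eauto).
    assert (L2 : length (snd (push g1 (snd (push g2 k)))) = m0) by (eapply push_length; eauto).
    rewrite comp_assoc, (IHg2 _ _ _ H1 L), <- comp_assoc, (IHg1 _ _ _ H2 L1), comp_assoc
      by typecheck.
    reflexivity.
  - apply wt_tens_inv in H as [a [b [c [d [H1 [H2 [-> ->]]]]]]].
    split_vec k a c A B. rewrite push_tens by src_length. cbn [fst snd].
    change (iota (Tens ?a ?b)) with (Tens (iota a) (iota b)).
    assert (Lb : length (snd (push g1 A)) = b) by (eapply push_length; eauto).
    assert (Ld : length (snd (push g2 B)) = d) by (eapply push_length; eauto).
    rewrite !Svec_app, !tens_comp, (IHg1 _ _ _ H1), (IHg2 _ _ _ H2) by (auto || typecheck).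
    reflexivity.
  - unfold wt in H; simpl in H; injection H as <- <-.
    split_vec k m n A B. rewrite push_braid by auto. cbn [fst snd iota tmap].
    rewrite !Svec_app. apply braid_natural; typecheck.
  - unfold wt in H; simpl in H; injection H as <- <-.
    split_vec k n m A B. rewrite push_braid_inv by auto. cbn [fst snd iota tmap].
    rewrite !Svec_app. apply (braid_inv_natural (Svec B) (Svec A)); typecheck.
Qed.

Lemma interp_spec f : forall n m, wt dcDS f n m ->
  f == Comp (Svec (snd (interp f))) (iota (fst (interp f))).
Proof.
  induction f; intros n0 m0 H.
  - destruct g as [g| |]; cbn [interp fst snd].
    + rewrite Svec_zeros. symmetry; apply id_comp. destruct g; typecheck.
    + simpl. change (iota (Id 1)) with I1.
      rewrite comp_id, tens_id0_r, comp_id by typecheck. reflexivity.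
    + simpl. change (iota (Id 1)) with I1.
      rewrite comp_id, tens_id0_r, comp_id by typecheck. reflexivity.
  - unfold wt in H; simpl in H; injection H as <- <-. cbn [interp fst snd].
    rewrite Svec_zeros. symmetry; apply id_comp; typecheck.
  - apply wt_comp_inv in H as [p [H1 H2]]. rewrite interp_comp. cbn [fst snd].
    change (iota (Comp ?a ?b)) with (Comp (iota a) (iota b)).
    assert (Hg1 : wt dcD (fst (interp f1)) p m0) by (apply interp_wt; auto).
    assert (L2 : length (snd (interp f2)) = p) by (eapply interp_length; eauto).
    assert (L1 : length (snd (interp f1)) = m0) by (eapply interp_length; eauto).
    assert (L3 : length (snd (push (fst (interp f1)) (snd (interp f2)))) = m0)
      by (eapply push_length; eauto).
    rewrite (IHf1 _ _ H2) at 1. rewrite (IHf2 _ _ H1) at 1.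
    rewrite comp_assoc, <- (comp_assoc (iota (fst (interp f1)))), (iota_push _ _ _ _ Hg1 L2)
      by typecheck.
    rewrite (comp_assoc (Svec _)), <- comp_assoc, Svec_vadd by (lia || typecheck). reflexivity.
  - apply wt_tens_inv in H as [a [b [c [d [H1 [H2 [-> ->]]]]]]]. cbn [interp fst snd].
    change (iota (Tens ?a ?b)) with (Tens (iota a) (iota b)).
    assert (L1 : length (snd (interp f1)) = b) by (eapply interp_length; eauto).
    assert (L2 : length (snd (interp f2)) = d) by (eapply interp_length; eauto).
    rewrite (IHf1 _ _ H1) at 1. rewrite (IHf2 _ _ H2) at 1.
    rewrite Svec_app, tens_comp by typecheck. reflexivity.
  - unfold wt in H; simpl in H; injection H as <- <-. cbn [interp fst snd].
    rewrite Svec_zeros. symmetry; apply id_comp; typecheck.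
  - unfold wt in H; simpl in H; injection H as <- <-. cbn [interp fst snd].
    rewrite Svec_zeros. symmetry; apply id_comp; typecheck.
Qed.

Lemma iota_EpsN n : iota (EpsN EpsD n) = EpsN EpsS n.
Proof. induction n; simpl; auto. unfold iota in *; simpl; rewrite IHn; auto. Qed.

Lemma iota_DeltaN n : iota (DeltaN DeltaD n) = DeltaN DeltaS n.
Proof. induction n; simpl; auto. unfold iota in *; simpl; rewrite IHn; auto. Qed.

Lemma wt_EpsN n : wt dcD (EpsN EpsD n) n 0.
Proof. induction n; simpl; typecheck. Qed.

Lemma wt_DeltaN n : wt dcD (DeltaN DeltaD n) n (n + n).
Proof. induction n; simpl; typecheck. Qed.

Lemma interp_convidS n : eqvD (fst (interp (convidS n))) (convidD n).
Proof.
  unfold convidS, convidD, conv_id. rewrite <- iota_EpsN.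
  apply (interp_iota _ _ _ (wt_EpsN n)).
Qed.

Lemma interp_convS n f g : homS n f -> homS n g ->
  eqvD (fst (interp (convS n f g))) (convD n (fst (interp f)) (fst (interp g))).
Proof.
  intros Hf Hg. unfold convS, convD, conv_comp. rewrite <- iota_DeltaN, interp_comp.
  destruct (interp_iota _ _ _ (wt_DeltaN n)) as [E1 E2]. cbn [interp fst snd] in *.
  rewrite E2.
  destruct (push_zeros (Tens (fst (interp f)) (fst (interp g))) (n + n) 0) as [E3 E4];
    [unfold homS in *; typecheck |].
  cbn [fst] in E3. rewrite E3, E1. reflexivity.
Qed.

Lemma iota_interp_hom n f : homS n f -> iota (fst (interp f)) == f.
Proof.
  intro H. symmetry. rewrite (interp_spec _ _ _ H) at 1.
  assert (L : length (snd (interp f)) = 0) by (eapply interp_length; eauto).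
  destruct (snd (interp f)); [|discriminate]. apply id_comp.
  unfold homS, wt in H. typecheck.
Qed.

Theorem theorem1p1 :
  exists Ginv : nat -> term genDS -> term genD,
    (forall n f, homS n f -> homD n (Ginv n f)) /\
    (forall n f g, homS n f -> homS n g -> eqvS f g -> eqvD (Ginv n f) (Ginv n g)) /\
    (forall n, eqvD (Ginv n (convidS n)) (convidD n)) /\
    (forall n f g, homS n f -> homS n g ->
        eqvD (Ginv n (convS n f g)) (convD n (Ginv n f) (Ginv n g))) /\
    (forall n f, homD n f -> eqvD (Ginv n (iota f)) f) /\
    (forall n f, homS n f -> eqvS (iota (Ginv n f)) f).
Proof.
  exists (fun _ f => fst (interp f)).
  split; [|split; [|split; [|split; [|split]]]].
  - intros n f H. apply interp_wt, H.
  - intros n f g Hf Hg E. apply (interp_eqv f g E n 0 Hf).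
  - apply interp_convidS.
  - apply interp_convS.
  - intros n f H. apply (interp_iota f n 0 H).
  - apply iota_interp_hom.
Qed.
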